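(* For each primary doctrine $P:\mathcal C^{op}\to\mathbf{MSLat}$ there is an isomorphism of doctrines, natural in $P$, $$\mathfrak I(P,J_{triv})\cong\mathfrak I(P^\exists,J_{\mathrm{Ex}}),$$ where $P^\exists$ is the existential completion of $P$ and $J_{\mathrm{Ex}}$ is the topology on $\mathcal C\rtimes P^\exists$ generated by the single morphisms $g:(d,u)\to(c,\exists_gu)$ for $g:d\to c$ in $\mathcal C$ and $u\in P^\exists(d)$.
   Context: $\mathbf{MSLat}$: meet-semilattices with top and finite-meet-preserving maps; a primary doctrine is $P:\mathcal C^{op}\to\mathbf{MSLat}$ with $\mathcal C$ having finite limits. $\mathcal C\rtimes P$ has objects $(c,x)$, $x\in P(c)$, morphisms $f:(c,x)\to(d,y)$ the $f:c\to d$ with $x\le P(f)(y)$; $J_{triv}$ is the trivial topology. Existential completion $P^\exists$: $P^\exists(c)$ is the poset reflection of the preorder of pairs $(f,x)$ with $f:d\to c$ in $\mathcal C$ and $x\in P(d)$, where $(g,y)\le(f,x)$ (for $g:e\to c$, $y\in P(e)$) iff there is $h:e\to d$ with $f\circ h=g$ and $y\le P(h)(x)$; for $g:e\to c$, $P^\exists(g)(f,x)=(k,P(h)(x))$ where $k:e\times_cd\to e$, $h:e\times_cd\to d$ form a pullback of $f$ along $g$. $P^\exists(g)$ has left adjoint $\exists_g(f,x)=(g\circ f,x)$. Geometric completion $\mathfrak I(P,J)$: $\mathfrak I(P,J)(c)$ is the inclusion-ordered set of sets $S$ of pairs $(f,x)$, $f:d\to c$, $x\in P(d)$, with (a) $(f,x)\in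 S$, $g:e\to d$, $y\le P(g)(x)$ imply $(f\circ g,y)\in S$; (b) if $\{h_i:(e_i,y_i)\to(d,x)\}$ is $J$-covering and all $(f\circ h_i,y_i)\in S$ then $(f,x)\in S$; $\mathfrak I(P,J)(f)(S)=\{(g,y):(f\circ g,y)\in S\}$. *)

Set Implicit Arguments.
Unset Strict Implicit.
Set Universe Polymorphism.

Record Cat : Type := {
  ob :> Type;
  hom : ob -> ob -> Type;
  idm : forall a, hom a a;
  cmp : forall a b c, hom b c -> hom a b -> hom a c;
  cmp_id_l : forall a b (f : hom a b), cmp (idm b) f = f;
  cmp_id_r : forall a b (f : hom a b), cmp f (idm a) = f;
  cmp_assoc : forall a b c d (f : hom a b) (g : hom b c) (h : hom c d),
      cmp h (cmp g f) = cmp (cmp h g) f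
}.
Arguments hom {C} : rename.
Arguments idm {C} : rename.
Arguments cmp {C a b c} : rename.

Definition is_pullback (C : Cat) (x a b c : C) (f : hom a c) (g : hom b c)
  (u : hom x a) (v : hom x b) : Prop :=
  cmp f u = cmp g v /\
  forall (y : C) (u' : hom y a) (v' : hom y b), cmp f u' = cmp g v' ->
    exists w : hom y x, (cmp u w = u' /\ cmp v w = v') /\
      forall w' : hom y x, cmp u w' = u' /\ cmp v w' = v' -> w' = w.

Definition is_terminal (C : Cat) (t : C) : Prop :=
  forall a : C, exists f : hom a t, forall g : hom a t, g = f.

Record FinLim (C : Cat) : Type := {
  tm : C;
  tm_term : is_terminal tm;
  pb : forall (a b c : C), hom a c -> hom b c -> C;
  pb1 : forall a b c (f : hom a c) (g : hom b c), hom (pb f g) a;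
  pb2 : forall a b c (f : hom a c) (g : hom b c), hom (pb f g) b;
  pb_is_pullback : forall a b c (f : hom a c) (g : hom b c),
      is_pullback f g (pb1 f g) (pb2 f g)
}.
Arguments pb {C} _ {a b c}.
Arguments pb1 {C} _ {a b c}.
Arguments pb2 {C} _ {a b c}.

Record IPos (C : Cat) : Type := {
  fib :> C -> Type;
  fle : forall c, fib c -> fib c -> Prop;
  rdx : forall c d, hom c d -> fib d -> fib c
}.
Arguments fle {C} _ {c}.
Arguments rdx {C} _ {c d}.

Record Doctrine (C : Cat) : Type := {
  dpos :> IPos C;
  le_refl : forall c (x : dpos c), fle dpos x x;
  le_trans : forall c (x y z : dpos c), fle dpos x y -> fle dpos y z -> fle dpos x z;
  le_antisym : forall c (x y : dpos c), fle dpos x y -> fle dpos y x -> x = y;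
  dtop : forall c, dpos c;
  dtop_max : forall c (x : dpos c), fle dpos x (dtop c);
  dmeet : forall c, dpos c -> dpos c -> dpos c;
  dmeet_glb : forall c (z x y : dpos c),
      fle dpos z (dmeet x y) <-> (fle dpos z x /\ fle dpos z y);
  rdx_top : forall c d (f : hom c d), rdx dpos f (dtop d) = dtop c;
  rdx_meet : forall c d (f : hom c d) (x y : dpos d),
      rdx dpos f (dmeet x y) = dmeet (rdx dpos f x) (rdx dpos f y);
  rdx_id : forall c (x : dpos c), rdx dpos (idm c) x = x;
  rdx_cmp : forall c d e (f : hom c d) (g : hom d e) (x : dpos e),
      rdx dpos (cmp g f) x = rdx dpos f (rdx dpos g x)
}.

Arguments le_refl {C} _ {c}.
Arguments le_trans {C} _ {c}.
Arguments le_antisym {C} _ {c}.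
Arguments dtop {C} _.
Arguments dtop_max {C} _ {c}.
Arguments dmeet {C} _ {c}.
Arguments dmeet_glb {C} _ {c}.
Arguments rdx_top {C} _ {c d}.
Arguments rdx_meet {C} _ {c d}.
Arguments rdx_id {C} _ {c}.
Arguments rdx_cmp {C} _ {c d e}.

Record pair (C : Cat) (Q : IPos C) (c : C) : Type := mkpair {
  p_dom : C;
  p_map : hom p_dom c;
  p_el : Q p_dom
}.
Arguments mkpair {C Q c p_dom}.
Arguments p_dom {C Q c}.
Arguments p_map {C Q c}.
Arguments p_el {C Q c}.

Definition ple (C : Cat) (P : IPos C) (c : C) (q p : pair P c) : Prop :=
  exists h : hom (p_dom q) (p_dom p),
    cmp (p_map p) h = p_map q /\ fle P (p_el q) (rdx P h (p_el p)).

Definition pequiv (C : Cat) (P : IPos C) (c : C) (q p : pair P c) : Prop :=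
  ple q p /\ ple p q.

(* equivalence classes of the preorder: the poset reflection *)
Definition is_class (C : Cat) (P : IPos C) (c : C) (A : pair P c -> Prop) : Prop :=
  exists p, forall q, A q <-> pequiv q p.

Definition PEfib (C : Cat) (P : IPos C) (c : C) : Type :=
  { A : pair P c -> Prop | is_class A }.

Definition PEle (C : Cat) (P : IPos C) (c : C) (A B : PEfib P c) : Prop :=
  forall p q, proj1_sig A p -> proj1_sig B q -> ple p q.

Definition rdx_pair (C : Cat) (L : FinLim C) (P : IPos C) (e c : C) (g : hom e c)
  (p : pair P c) : pair P e :=
  mkpair (pb1 L g (p_map p)) (rdx P (pb2 L g (p_map p)) (p_el p)).

Lemma doc_mono (C : Cat) (P : Doctrine C) (c d : C) (f : hom c d) (x y : P d) :
  fle P x y -> fle P (rdx P f x) (rdx P f y).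
Proof.
  intros Hxy.
  assert (E : dmeet P x y = x).
  { apply le_antisym.
    - apply (proj1 (dmeet_glb P (dmeet P x y) x y) (le_refl P _)).
    - apply dmeet_glb; split; [apply le_refl | exact Hxy]. }
  rewrite <- E, rdx_meet.
  exact (proj2 (proj1 (dmeet_glb P _ _ _) (le_refl P _))).
Qed.

Lemma ple_refl (C : Cat) (P : Doctrine C) (c : C) (p : pair P c) : ple p p.
Proof.
  exists (idm _); split; [apply cmp_id_r|]. rewrite rdx_id; apply le_refl.
Qed.

Lemma ple_trans (C : Cat) (P : Doctrine C) (c : C) (p q r : pair P c) :
  ple p q -> ple q r -> ple p r.
Proof.
  intros [h [H1 H2]] [k [K1 K2]].
  exists (cmp k h); split.
  - rewrite cmp_assoc, K1; exact H1.
  - rewrite rdx_cmp. eapply le_trans; [exact H2|]. apply doc_mono; exact K2.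
Qed.

Lemma rdx_pair_mono (C : Cat) (L : FinLim C) (P : Doctrine C) (e c : C)
  (g : hom e c) (p q : pair P c) :
  ple p q -> ple (rdx_pair L g p) (rdx_pair L g q).
Proof.
  intros [m [M1 M2]].
  destruct (pb_is_pullback L g (p_map q)) as [_ U].
  destruct (pb_is_pullback L g (p_map p)) as [Sq _].
  destruct (U _ (pb1 L g (p_map p)) (cmp m (pb2 L g (p_map p)))) as [n [[N1 N2] _]].
  { rewrite Sq, cmp_assoc, M1; reflexivity. }
  exists n; split; simpl.
  - exact N1.
  - rewrite <- rdx_cmp, N2, rdx_cmp. apply doc_mono; exact M2.
Qed.

Lemma rdx_class (C : Cat) (L : FinLim C) (P : Doctrine C) (e c : C)
  (g : hom e c) (A : PEfib P c) :
  is_class (fun q => exists p, proj1_sig A p /\ pequiv q (rdx_pair L g p)).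
Proof.
  destruct A as [A [p0 Hp0]]; simpl.
  exists (rdx_pair L g p0); intros q; split.
  - intros [p [Ap [E1 E2]]]. apply Hp0 in Ap as [F1 F2]. split.
    + eapply ple_trans; [exact E1|]. apply rdx_pair_mono; exact F1.
    + eapply ple_trans; [|exact E2]. apply rdx_pair_mono; exact F2.
  - intros Hq. exists p0; split; [apply Hp0; split; apply ple_refl|exact Hq].
Qed.

Definition PErdx (C : Cat) (L : FinLim C) (P : Doctrine C) (e c : C) (g : hom e c)
  (A : PEfib P c) : PEfib P e :=
  exist _ (fun q => exists p, proj1_sig A p /\ pequiv q (rdx_pair L g p))
          (rdx_class L g A).

Definition PE (C : Cat) (L : FinLim C) (P : Doctrine C) : IPos C :=
  {| fib := fun c => PEfib P c;
     fle := fun c A B => PEle A B;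
     rdx := fun c d g A => PErdx L g A |}.

(* a candidate sieve on the object (d,x) of C ⋊ Q *)
Definition sieve (C : Cat) (Q : IPos C) (d : C) : Type :=
  forall e : C, Q e -> hom e d -> Prop.

Definition is_sieve (C : Cat) (Q : IPos C) (d : C) (x : Q d) (S : sieve Q d) : Prop :=
  (forall e y h, S e y h -> fle Q y (rdx Q h x)) /\
  (forall e y (h : hom e d) e' y' (k : hom e' e),
      S e y h -> fle Q y' (rdx Q k y) -> S e' y' (cmp h k)).

Definition max_sieve (C : Cat) (Q : IPos C) (d : C) (x : Q d) : sieve Q d :=
  fun e y h => fle Q y (rdx Q h x).

Arguments max_sieve {C Q d} x _ _ _.

Definition pb_sieve (C : Cat) (Q : IPos C) (d e : C) (y : Q e) (k : hom e d)
  (R : sieve Q d) : sieve Q e :=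
  fun e' y' h => R e' y' (cmp k h) /\ fle Q y' (rdx Q h y).

Arguments pb_sieve {C Q d e} y k R _ _ _.

Definition topology (C : Cat) (Q : IPos C) : Type :=
  forall d : C, Q d -> sieve Q d -> Prop.

Definition is_topology (C : Cat) (Q : IPos C) (J : topology Q) : Prop :=
  (forall d x S, J d x S -> is_sieve x S) /\
  (forall d x, J d x (max_sieve x)) /\
  (forall d x S e y (k : hom e d), J d x S -> fle Q y (rdx Q k x) ->
      J e y (pb_sieve y k S)) /\
  (forall d x S R, J d x S -> is_sieve x R ->
      (forall e y h, S e y h -> J e y (pb_sieve y h R)) -> J d x R).

Definition gen_sieve (C : Cat) (Q : IPos C) (d : C) (I : Type) (e : I -> C)
  (y : forall i, Q (e i)) (h : forall i, hom (e i) d) : sieve Q d :=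
  fun e' y' h' => exists i (k : hom e' (e i)),
      fle Q y' (rdx Q k (y i)) /\ h' = cmp (h i) k.

Arguments gen_sieve {C Q d I} e y h _ _ _.

Definition J_triv (C : Cat) (Q : IPos C) : topology Q :=
  fun d x S => forall e y h, S e y h <-> max_sieve x e y h.

Arguments J_triv {C} Q.

(* J_Ex: the topology on C ⋊ P^exists generated by the single morphisms
   g : (d,u) -> (c, exists_g u); here exists_g u is the class v containing
   (g o f, z) for a representative (f, z) of u. *)
Definition J_Ex (C : Cat) (L : FinLim C) (P : Doctrine C) : topology (PE L P) :=
  fun c v S =>
    forall J : topology (PE L P), is_topology J ->
      (forall (d c' : C) (g : hom d c') (u : PE L P d) (v' : PE L P c')
              (f : pair P d),
         proj1_sig u f -> proj1_sig v' (mkpair (cmp g (p_map f)) (p_el f)) ->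
         J c' v' (gen_sieve (fun _ : unit => d) (fun _ => u) (fun _ => g))) ->
      J c v S.

Arguments J_Ex {C} L P.

Definition is_ideal (C : Cat) (Q : IPos C) (J : topology Q) (c : C)
  (S : pair Q c -> Prop) : Prop :=
  (forall p, S p -> forall e (g : hom e (p_dom p)) (y : Q e),
      fle Q y (rdx Q g (p_el p)) -> S (mkpair (cmp (p_map p) g) y)) /\
  (forall (d : C) (f : hom d c) (x : Q d) (I : Type) (e : I -> C)
          (y : forall i, Q (e i)) (h : forall i, hom (e i) d),
      (forall i, fle Q (y i) (rdx Q (h i) x)) ->
      J d x (gen_sieve e y h) ->
      (forall i, S (mkpair (cmp f (h i)) (y i))) ->
      S (mkpair f x)).

Definition ideal_rdx (C : Cat) (Q : IPos C) (c' c : C) (f : hom c' c)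
  (S : pair Q c -> Prop) : pair Q c' -> Prop :=
  fun p => S (mkpair (cmp f (p_map p)) (p_el p)).

Definition sub (A : Type) (S T : A -> Prop) : Prop := forall a, S a -> T a.
Definition same (A : Type) (S T : A -> Prop) : Prop := forall a, S a <-> T a.

Definition ideal_closure (C : Cat) (Q : IPos C) (J : topology Q) (c : C)
  (G : pair Q c -> Prop) : pair Q c -> Prop :=
  fun p => forall S, is_ideal J S -> sub G S -> S p.

Definition doctrine_iso (C : Cat) (Q1 Q2 : IPos C) (J1 : topology Q1)
  (J2 : topology Q2) (phi : forall c : C, (pair Q1 c -> Prop) -> (pair Q2 c -> Prop))
  : Prop :=
  (forall c S, is_ideal J1 S -> is_ideal J2 (phi c S)) /\
  (forall c S1 S2, is_ideal J1 S1 -> is_ideal J1 S2 ->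
      (sub S1 S2 <-> sub (phi c S1) (phi c S2))) /\
  (forall c T, is_ideal J2 T -> exists S, is_ideal J1 S /\ same (phi c S) T) /\
  (forall c' c (f : hom c' c) S, is_ideal J1 S ->
      same (phi c' (ideal_rdx f S)) (ideal_rdx f (phi c S))).

Record Functor (C D : Cat) : Type := {
  fob :> C -> D;
  fhom : forall a b, hom a b -> hom (fob a) (fob b);
  fhom_id : forall a, fhom (idm a) = idm (fob a);
  fhom_cmp : forall a b c (f : hom a b) (g : hom b c),
      fhom (cmp g f) = cmp (fhom g) (fhom f)
}.
Arguments fhom {C D} _ {a b}.

Record DocMor (C D : Cat) (LC : FinLim C) (LD : FinLim D)
  (P : Doctrine C) (R : Doctrine D) : Type := {
  dF : Functor C D;
  dF_term : is_terminal (dF (tm LC));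
  dF_pb : forall a b c (f : hom a c) (g : hom b c),
      is_pullback (fhom dF f) (fhom dF g) (fhom dF (pb1 LC f g)) (fhom dF (pb2 LC f g));
  db : forall c, P c -> R (dF c);
  db_top : forall c, db (dtop P c) = dtop R (dF c);
  db_meet : forall c (x y : P c), db (dmeet P x y) = dmeet R (db x) (db y);
  db_nat : forall c d (f : hom c d) (x : P d),
      db (rdx P f x) = rdx R (fhom dF f) (db x)
}.
Arguments dF {C D LC LD P R}.
Arguments db {C D LC LD P R} _ {c}.

Definition Itriv_map (C D : Cat) (LC : FinLim C) (LD : FinLim D)
  (P : Doctrine C) (R : Doctrine D) (m : DocMor LC LD P R) (c : C)
  (S : pair P c -> Prop) : pair R (dF m c) -> Prop :=
  ideal_closure (J_triv R)
    (fun p => exists q : pair P c, S q /\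
        p = mkpair (fhom (dF m) (p_map q)) (db m (p_el q))).

(* action of I((-)^exists, J_Ex) on a doctrine morphism: m^exists sends the
   class of (f, x) to the class of (F f, b x); take the ideal generated by
   the images (F g, m^exists u) of the elements (g, u) of T *)
Definition IEx_map (C D : Cat) (LC : FinLim C) (LD : FinLim D)
  (P : Doctrine C) (R : Doctrine D) (m : DocMor LC LD P R) (c : C)
  (T : pair (PE LC P) c -> Prop) : pair (PE LD R) (dF m c) -> Prop :=
  ideal_closure (J_Ex LD R)
    (fun p => exists (q : pair (PE LC P) c) (w : PE LD R (dF m (p_dom q))),
        T q /\ p = mkpair (fhom (dF m) (p_map q)) w /\
        exists r : pair P (p_dom q), proj1_sig (p_el q) r /\
          proj1_sig w (mkpair (fhom (dF m) (p_map r)) (db m (p_el r)))).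
Arguments Itriv_map {C D LC LD P R} m {c} S _.
Arguments IEx_map {C D LC LD P R} m {c} T _.

Set Implicit Arguments.
Unset Strict Implicit.
Set Universe Polymorphism.
(* Otherwise the index type of covering families gets fixed to Set. *)
Unset Universe Minimization ToSet.

(* For the trivial topology an ideal of P is just a down-closed set S of pairs
   (f, x); it is sent to the set of pairs (g, u) of P^∃ such that (g h, x) is
   in S for every representative (h, x) of u, and an ideal of P^∃ is sent back
   to its principal part, the pairs (f, x) with (f, [id, x]) in it. These are
   inverse because J_Ex-covering says exactly that (g, u) is covered by the
   pairs (g h, [id, x]) for the representatives (h, x) of u, so a J_Ex-ideal is
   determined by its principal part; reindexing and doctrine morphisms act
   representative-wise, which gives naturality. *)

Lemma pb_square (C : Cat) (L : FinLim C) a b c (f : hom a c) (g : hom b c) :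
  cmp f (pb1 L f g) = cmp g (pb2 L f g).
Proof. exact (proj1 (pb_is_pullback L f g)). Qed.

Lemma cmp_eq_cmpr (C : Cat) (a b b' c d : C) (f : hom b c) (g : hom a b)
  (f' : hom b' c) (g' : hom a b') (h : hom d a) :
  cmp f g = cmp f' g' -> cmp f (cmp g h) = cmp f' (cmp g' h).
Proof. intros E; rewrite !cmp_assoc, E; reflexivity. Qed.

Definition PEunit (C : Cat) (P : IPos C) (c : C) (x : P c) : PEfib P c :=
  exist _ (fun q => pequiv q (mkpair (idm c) x))
    (ex_intro _ (mkpair (idm c) x) (fun q => iff_refl _)).

Definition down_closed (C : Cat) (Q : IPos C) c (S : pair Q c -> Prop) : Prop :=
  forall p, S p -> forall e (g : hom e (p_dom p)) (y : Q e),
    fle Q y (rdx Q g (p_el p)) -> S (mkpair (cmp (p_map p) g) y).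

Section ExistentialCompletion.

Variables (C : Cat) (L : FinLim C) (P : Doctrine C).

Lemma pequiv_refl c (p : pair P c) : pequiv p p.
Proof. split; apply ple_refl. Qed.

Lemma PEunit_rep c (x : P c) : proj1_sig (PEunit x) (mkpair (idm c) x).
Proof. apply pequiv_refl. Qed.

Lemma class_inhabited c (A : PEfib P c) : exists p, proj1_sig A p.
Proof. destruct A as [A [p Hp]]; exists p; apply Hp, pequiv_refl. Qed.

Lemma class_ple c (A : PEfib P c) p q :
  proj1_sig A p -> proj1_sig A q -> ple p q.
Proof.
  destruct A as [A [p0 Hp]]; simpl; intros Hp' Hq.
  apply Hp in Hp'; apply Hp in Hq. exact (ple_trans (proj1 Hp') (proj2 Hq)).
Qed.

Lemma PEle_of_reps c (A B : PEfib P c) a b :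
  proj1_sig A a -> proj1_sig B b -> ple a b -> PEle A B.
Proof.
  intros Ha Hb Hab p q Hp Hq.
  exact (ple_trans (class_ple Hp Ha) (ple_trans Hab (class_ple Hb Hq))).
Qed.

Lemma PErdx_rep e c (g : hom e c) (A : PEfib P c) a :
  proj1_sig A a -> proj1_sig (PErdx L g A) (rdx_pair L g a).
Proof. intros Ha; exists a; split; [exact Ha | apply pequiv_refl]. Qed.

Lemma ple_rdx_pair e c (g : hom e c) (p : pair P c) (q : pair P e)
  (t : hom (p_dom q) (p_dom p)) :
  cmp g (p_map q) = cmp (p_map p) t -> fle P (p_el q) (rdx P t (p_el p)) ->
  ple q (rdx_pair L g p).
Proof.
  intros E H. destruct (pb_is_pullback L g (p_map p)) as [_ U].
  destruct (U _ _ t E) as [w [[W1 W2] _]].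
  exists w; simpl; split; [exact W1|].
  rewrite <- rdx_cmp, W2; exact H.
Qed.

Lemma PEunit_le_rdx_rep c (A : PEfib P c) (r : pair P c) :
  proj1_sig A r -> PEle (PEunit (p_el r)) (PErdx L (p_map r) A).
Proof.
  intros Hr. apply (PEle_of_reps (PEunit_rep (p_el r)) (PErdx_rep (p_map r) Hr)).
  apply (ple_rdx_pair (p := r) (q := mkpair (idm _) (p_el r)) (t := idm _)); simpl.
  - reflexivity.
  - rewrite rdx_id; apply le_refl.
Qed.

Lemma PEunit_le_rdx c d (t : hom c d) (x : P c) (x' : P d) :
  fle P x (rdx P t x') -> PEle (PEunit x) (PErdx L t (PEunit x')).
Proof.
  intros H. apply (PEle_of_reps (PEunit_rep x) (PErdx_rep t (PEunit_rep x'))).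
  apply (ple_rdx_pair (p := mkpair (idm _) x') (q := mkpair (idm _) x) (t := t));
    simpl; [|exact H].
  rewrite cmp_id_r, cmp_id_l; reflexivity.
Qed.

Lemma PEle_rdx_cmp a b c (k' : hom a b) (k : hom b c)
  (y' : PEfib P a) (y : PEfib P b) (u : PEfib P c) :
  PEle y' (PErdx L k' y) -> PEle y (PErdx L k u) -> PEle y' (PErdx L (cmp k k') u).
Proof.
  intros H1 H2.
  destruct (class_inhabited y') as [a' Ha'], (class_inhabited y) as [a0 Ha0],
    (class_inhabited u) as [b0 Hb0].
  destruct (H1 _ _ Ha' (PErdx_rep k' Ha0)) as [n [N1 N2]].
  destruct (H2 _ _ Ha0 (PErdx_rep k Hb0)) as [m [M1 M2]].
  simpl in N1, N2, M1, M2.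
  apply (PEle_of_reps Ha' (PErdx_rep (cmp k k') Hb0)).
  apply (ple_rdx_pair (t := cmp (pb2 L k (p_map b0)) (cmp m (cmp (pb2 L k' (p_map a0)) n)))).
  - rewrite <- N1, <- !cmp_assoc, (cmp_eq_cmpr _ (pb_square L k' (p_map a0))).
    transitivity (cmp k (cmp (cmp (pb1 L k (p_map b0)) m) (cmp (pb2 L k' (p_map a0)) n)));
      [rewrite M1; reflexivity|].
    rewrite <- cmp_assoc. apply (cmp_eq_cmpr _ (pb_square L k (p_map b0))).
  - eapply le_trans; [exact N2|]. rewrite !rdx_cmp. apply doc_mono, doc_mono, M2.
Qed.

Lemma down_closed_ple c (S : pair P c -> Prop) d (f : hom d c) (a r : pair P d) :
  down_closed S -> S (mkpair (cmp f (p_map a)) (p_el a)) -> ple r a ->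
  S (mkpair (cmp f (p_map r)) (p_el r)).
Proof.
  intros HS Ha [h [H1 H2]]. pose proof (HS _ Ha _ h _ H2) as H; simpl in H.
  rewrite <- cmp_assoc, H1 in H. exact H.
Qed.

Lemma down_closed_ple_rdx c (S : pair P c -> Prop) d e (f : hom d c) (g : hom e d)
  (a : pair P d) (r : pair P e) :
  down_closed S -> S (mkpair (cmp f (p_map a)) (p_el a)) -> ple r (rdx_pair L g a) ->
  S (mkpair (cmp (cmp f g) (p_map r)) (p_el r)).
Proof.
  intros HS Ha [h [H1 H2]]; simpl in H1, H2. rewrite <- rdx_cmp in H2.
  pose proof (HS _ Ha _ _ _ H2) as H; simpl in H. rewrite <- H1.
  replace (cmp (cmp f g) (cmp (pb1 L g (p_map a)) h))
    with (cmp (cmp f (p_map a)) (cmp (pb2 L g (p_map a)) h)); [exact H|].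
  rewrite <- !cmp_assoc. f_equal. symmetry. apply (cmp_eq_cmpr _ (pb_square L g (p_map a))).
Qed.

Lemma is_ideal_triv c (S : pair P c -> Prop) :
  is_ideal (J_triv P) S <-> down_closed S.
Proof.
  split; [intros [HS _]; exact HS|]. intros HS; split; [exact HS|].
  intros d f x I e y h _ HJ Hin.
  destruct (proj2 (HJ d x (idm d))) as [i [k [Hk Ek]]].
  { unfold max_sieve. rewrite rdx_id; apply le_refl. }
  pose proof (HS _ (Hin i) _ k _ Hk) as H; simpl in H.
  rewrite <- cmp_assoc, <- Ek, cmp_id_r in H. exact H.
Qed.

Lemma ideal_closure_triv c (G : pair P c -> Prop) p :
  ideal_closure (J_triv P) G p <-> exists q, G q /\ ple p q.
Proof.
  split.
  - intros H. apply H.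
    + apply is_ideal_triv. intros p0 [q [Gq Hpq]] e g y Hy. exists q; split; [exact Gq|].
      eapply ple_trans; [|exact Hpq]. exists g; split; [reflexivity | exact Hy].
    + intros q Gq; exists q; split; [exact Gq | apply ple_refl].
  - intros [q [Gq [h [H1 H2]]]] S HS HG.
    pose proof (proj1 HS _ (HG _ Gq) _ h _ H2) as H; simpl in H.
    rewrite H1 in H. destruct p; exact H.
Qed.

(* A concrete topology containing J_Ex: R covers v when it contains every
   representative (r, x) of v, viewed as the morphism r : (dom r, [id, x]) -> (d, v). *)
Definition J_rep : topology (PE L P) :=
  fun d v R => is_sieve v R /\
    forall r : pair P d, proj1_sig v r -> R (p_dom r) (PEunit (p_el r)) (p_map r).

Lemma max_sieve_is_sieve d (v : PE L P d) : is_sieve v (max_sieve v).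
Proof.
  split; [intros e y h H; exact H|].
  intros e y h e' y' k H1 H2; exact (PEle_rdx_cmp H2 H1).
Qed.

Lemma pb_sieve_is_sieve d (x : PE L P d) S e (y : PE L P e) (k : hom e d) :
  is_sieve x S -> is_sieve y (pb_sieve y k S).
Proof.
  intros [_ HS]. split.
  - intros e0 y0 h0 [_ H]; exact H.
  - intros e0 y0 h0 e' y' k' [H1 H2] H3. split.
    + rewrite cmp_assoc; exact (HS _ _ _ _ _ _ H1 H3).
    + exact (PEle_rdx_cmp H3 H2).
Qed.

Lemma J_rep_pullback d (x : PE L P d) S e (y : PE L P e) (k : hom e d) :
  J_rep x S -> PEle y (PErdx L k x) -> J_rep y (pb_sieve y k S).
Proof.
  intros [HS Hcov] Hyk. split; [exact (pb_sieve_is_sieve y k HS)|].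
  intros r' Hr'. split; [|exact (PEunit_le_rdx_rep Hr')].
  destruct (class_inhabited x) as [r Hr].
  destruct (Hyk _ _ Hr' (PErdx_rep k Hr)) as [m [Em Hm]]; simpl in Em, Hm.
  rewrite <- Em, (cmp_eq_cmpr _ (pb_square L k (p_map r))).
  apply (proj2 HS _ (PEunit (p_el r))); [exact (Hcov r Hr)|].
  apply PEunit_le_rdx. rewrite rdx_cmp. exact Hm.
Qed.

Lemma J_rep_topology : is_topology J_rep.
Proof.
  split; [|split; [|split]].
  - intros d x S [H _]; exact H.
  - intros d x; split; [apply max_sieve_is_sieve|].
    intros r Hr. exact (PEunit_le_rdx_rep Hr).
  - intros d x S e y k; apply J_rep_pullback.
  - intros d x S R [_ HS] HR Hsub. split; [exact HR|].
    intros r Hr. destruct (Hsub _ _ _ (HS r Hr)) as [_ H].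
    destruct (H _ (PEunit_rep (p_el r))) as [H' _]; simpl in H'.
    rewrite cmp_id_r in H'. exact H'.
Qed.

Lemma J_rep_generators (d c : C) (g : hom d c) (u : PE L P d) (v : PE L P c)
  (f : pair P d) :
  proj1_sig u f -> proj1_sig v (mkpair (cmp g (p_map f)) (p_el f)) ->
  J_rep v (gen_sieve (fun _ : unit => d) (fun _ => u) (fun _ => g)).
Proof.
  intros Hf Hv.
  assert (Huv : PEle u (PErdx L g v)).
  { apply (PEle_of_reps Hf (PErdx_rep g Hv)).
    apply (ple_rdx_pair (p := mkpair (cmp g (p_map f)) (p_el f)) (q := f) (t := idm _));
      simpl; [rewrite cmp_id_r; reflexivity|].
    rewrite rdx_id; apply le_refl. }
  split; [split|].
  - intros e y h [i [k [Hk ->]]]. exact (PEle_rdx_cmp Hk Huv).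
  - intros e y h e' y' k' [i [k [Hk ->]]] H. exists i, (cmp k k'). split.
    + exact (PEle_rdx_cmp H Hk).
    + symmetry; apply cmp_assoc.
  - intros r Hr. destruct (class_ple Hr Hv) as [n [En Hn]]; simpl in En, Hn.
    exists tt, (cmp (p_map f) n). split.
    + apply (PEle_of_reps (PEunit_rep (p_el r)) (PErdx_rep _ Hf)).
      apply (ple_rdx_pair (p := f) (q := mkpair (idm _) (p_el r)) (t := n));
        simpl; [rewrite cmp_id_r; reflexivity | exact Hn].
    + rewrite <- En. symmetry; apply cmp_assoc.
Qed.

Lemma J_Ex_sub_J_rep d v R : J_Ex L P d v R -> J_rep v R.
Proof. intros H; exact (H _ J_rep_topology J_rep_generators). Qed.

Definition lift_ideal c (S : pair P c -> Prop) : pair (PE L P) c -> Prop :=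
  fun p => forall r : pair P (p_dom p), proj1_sig (p_el p : PEfib P _) r ->
    S (mkpair (cmp (p_map p) (p_map r)) (p_el r)).

Definition principal_part c (T : pair (PE L P) c -> Prop) : pair P c -> Prop :=
  fun q => T (@mkpair C (PE L P) c _ (p_map q) (PEunit (p_el q))).

Lemma lift_ideal_is_ideal c (S : pair P c -> Prop) :
  down_closed S -> is_ideal (J_Ex L P) (lift_ideal S).
Proof.
  intros HS. split.
  - intros p Hp e g y Hy r Hr; simpl in *.
    destruct (class_inhabited (p_el p)) as [a Ha].
    exact (down_closed_ple_rdx HS (Hp a Ha) (Hy _ _ Hr (PErdx_rep g Ha))).
  - intros d f x I e y h _ HJ Hin r Hr.
    destruct (J_Ex_sub_J_rep HJ) as [_ Hcov].
    destruct (Hcov r Hr) as [i [k [Hk Ek]]].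
    destruct (class_inhabited (y i)) as [t Ht].
    pose proof (down_closed_ple_rdx HS (Hin i t Ht)
                  (Hk _ _ (PEunit_rep (p_el r)) (PErdx_rep k Ht))) as H; simpl in H.
    rewrite cmp_id_r in H. simpl. rewrite Ek, cmp_assoc. exact H.
Qed.

Lemma ideal_Ex_principal_cover c (T : pair (PE L P) c -> Prop) :
  is_ideal (J_Ex L P) T -> forall p : pair (PE L P) c,
  (forall r : pair P (p_dom p), proj1_sig (p_el p : PEfib P _) r ->
      T (@mkpair C (PE L P) c _ (cmp (p_map p) (p_map r)) (PEunit (p_el r)))) -> T p.
Proof.
  intros [_ HT] [dp gp up] H; simpl in *.
  destruct (class_inhabited up) as [r0 Hr0].
  apply (HT dp gp up unit (fun _ => p_dom r0) (fun _ => PEunit (p_el r0)) (fun _ => p_map r0)).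
  - intros _. exact (PEunit_le_rdx_rep Hr0).
  - intros J _ Hgen.
    assert (Hr0' : proj1_sig up (mkpair (cmp (p_map r0) (idm _)) (p_el r0)))
      by (rewrite cmp_id_r; destruct r0; exact Hr0).
    unfold gen_sieve.
    exact (Hgen _ _ (p_map r0) _ up (mkpair (idm _) (p_el r0)) (PEunit_rep _) Hr0').
  - intros _. exact (H r0 Hr0).
Qed.

Lemma principal_part_down_closed c (T : pair (PE L P) c -> Prop) :
  is_ideal (J_Ex L P) T -> down_closed (principal_part T).
Proof.
  intros HT p Hp e g y Hy.
  exact (proj1 HT _ Hp e g (PEunit y) (PEunit_le_rdx Hy)).
Qed.

Lemma lift_principal_part c (T : pair (PE L P) c -> Prop) :
  is_ideal (J_Ex L P) T -> same (lift_ideal (principal_part T)) T.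
Proof.
  intros HT p; split.
  - intros H. exact (ideal_Ex_principal_cover HT H).
  - intros H r Hr. exact (proj1 HT _ H _ (p_map r) (PEunit (p_el r)) (PEunit_le_rdx_rep Hr)).
Qed.

Lemma principal_part_lift c (S : pair P c -> Prop) (q : pair P c) :
  down_closed S -> principal_part (lift_ideal S) q <-> S q.
Proof.
  intros HS; split.
  - intros H. pose proof (H _ (PEunit_rep (p_el q))) as Hq; simpl in Hq.
    rewrite cmp_id_r in Hq. destruct q; exact Hq.
  - intros Hq r [Hr _]; simpl in *.
    apply (down_closed_ple (a := mkpair (idm _) (p_el q)) HS); [|exact Hr].
    simpl. rewrite cmp_id_r. destruct q; exact Hq.
Qed.

Lemma lift_ideal_iso : doctrine_iso (J_triv P) (J_Ex L P) (@lift_ideal).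
Proof.
  split; [|split; [|split]].
  - intros c S HS. apply lift_ideal_is_ideal, is_ideal_triv, HS.
  - intros c S1 S2 H1%is_ideal_triv H2%is_ideal_triv; split.
    + intros Hs p Hp r Hr. apply Hs, Hp, Hr.
    + intros Hs q Hq%(principal_part_lift _ H1).
      exact (proj1 (principal_part_lift q H2) (Hs _ Hq)).
  - intros c T HT. exists (principal_part T). split.
    + apply is_ideal_triv, principal_part_down_closed, HT.
    + apply lift_principal_part, HT.
  - intros c' c f S _ p. unfold lift_ideal, ideal_rdx; simpl.
    split; intros H r Hr; specialize (H r Hr); simpl in *;
      [rewrite <- cmp_assoc | rewrite cmp_assoc]; exact H.
Qed.

End ExistentialCompletion.

Arguments lift_ideal {C} L {P c} S _.

Lemma lift_ideal_natural (C D : Cat) (LC : FinLim C) (LD : FinLim D) (P : Doctrine C)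
  (R : Doctrine D) (m : DocMor LC LD P R) (c : C) (S : pair P c -> Prop) :
  down_closed S -> same (lift_ideal LD (Itriv_map m S)) (IEx_map m (lift_ideal LC S)).
Proof.
  intros HS p; split.
  - intros Hp T HT HG. apply (ideal_Ex_principal_cover HT). intros t Ht.
    destruct (proj1 (ideal_closure_triv _ _) (Hp t Ht))
      as [q0 [[q [Sq ->]] [h [H1 H2]]]]; simpl in H1, H2.
    assert (Gq : T (@mkpair D (PE LD R) (dF m c) _ (fhom (dF m) (p_map q))
                              (PEunit (db m (p_el q))))).
    { apply HG. exists (@mkpair C (PE LC P) c _ (p_map q) (PEunit (p_el q))),
        (PEunit (db m (p_el q))). split; [|split; [reflexivity|]].
      - exact (proj2 (principal_part_lift LC q HS) Sq).
      - exists (mkpair (idm _) (p_el q)). split; [apply PEunit_rep|]. simpl.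
        rewrite fhom_id. apply PEunit_rep. }
    pose proof (proj1 HT _ Gq _ h _ (PEunit_le_rdx (L := LD) H2)) as H; simpl in H.
    rewrite H1 in H. exact H.
  - intros Hp. apply Hp.
    + apply lift_ideal_is_ideal. intros p0 H0 e g y Hy.
      apply ideal_closure_triv. apply ideal_closure_triv in H0 as [q [Gq Hpq]].
      exists q; split; [exact Gq|].
      eapply ple_trans; [|exact Hpq]. exists g; split; [reflexivity | exact Hy].
    + intros p0 [q [w [Hq [-> [r [Hr Hw]]]]]] t Ht; simpl.
      apply ideal_closure_triv.
      exists (mkpair (fhom (dF m) (cmp (p_map q) (p_map r))) (db m (p_el r))). split.
      * exists (mkpair (cmp (p_map q) (p_map r)) (p_el r)).
        split; [exact (Hq r Hr) | reflexivity].
      * destruct (class_ple Ht Hw) as [n [N1 N2]]; simpl in N1, N2.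
        exists n; simpl; split; [|exact N2].
        rewrite fhom_cmp, <- cmp_assoc, N1; reflexivity.
Qed.

Theorem proposition7p1 :
  exists Phi : forall (C : Cat) (L : FinLim C) (P : Doctrine C) (c : C),
      (pair P c -> Prop) -> (pair (PE L P) c -> Prop),
    (forall (C : Cat) (L : FinLim C) (P : Doctrine C),
        doctrine_iso (J_triv P) (J_Ex L P) (Phi C L P)) /\
    (forall (C D : Cat) (LC : FinLim C) (LD : FinLim D) (P : Doctrine C)
            (R : Doctrine D) (m : DocMor LC LD P R) (c : C) (S : pair P c -> Prop),
        is_ideal (J_triv P) S ->
        same (Phi D LD R (dF m c) (Itriv_map m S))
             (IEx_map m (Phi C LC P c S))).
Proof.
  exists (fun C L P c S => @lift_ideal C L P c S). split.
  - intros C L P. apply lift_ideal_iso.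
  - intros C D LC LD P R m c S HS. apply lift_ideal_natural, is_ideal_triv, HS.
Qed.
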